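(* For every $\delta>0$ there exists $\eta>0$ such that the following holds. Let $G$ be an abelian group, $H$ a finite subgroup of $G$, and $T \subset G\setminus H$ a non-empty finite subset disjoint from $H$ with $|T|/|H| < \eta$. Then \[\left|\epsilon^*(H\cup T) - \frac{2|T|}{|H|}\right| \le \delta\,\frac{|T|}{|H|}.\] That is, the smallest $\epsilon$ for which $H\cup T$ is a distributional $\epsilon$-approximate group equals $2|T|/|H| + o(|T|/|H|)$ as $|T|/|H| \to 0$.
   Context: For a non-empty finite subset $A$ of an abelian group $G$, define $\epsilon^*(A) = 1 - \max_{U \subset G,\, |U|=|A|} \frac{|\{(a,b)\in A\times A : a+b \in U\}|}{|A|^2}$. Thus $A$ is a distributional $\epsilon$-approximate group (i.e. there exists $U\subset G$ with $|U|=|A|$ such that the proportion of pairs $(a,b)\in A\times A$ with $a+b\in U$ is at least $1-\epsilon$) if and only if $\epsilon \ge \epsilon^*(A)$. *)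

From HB Require Import structures.
From mathcomp Require Import all_boot all_order all_algebra.
From mathcomp Require Import finmap.
From mathcomp Require Import boolp reals.
Set Implicit Arguments. Unset Strict Implicit. Unset Printing Implicit Defensive.
Import Order.TTheory GRing.Theory Num.Theory.
Local Open Scope fset_scope.
Local Open Scope ring_scope.

Local Open Scope nat_scope.
Definition pair_count (G : zmodType) (A U : {fset G}) : nat :=
  \sum_(a <- A) \sum_(b <- A) nat_of_bool ((a + b)%R \in U).

(* max over U subset of G with |U| = |A| of pair_count A U
   (the attained values lie in [0, |A|^2], and U := A is admissible) *)
Definition max_pair_count (G : zmodType) (A : {fset G}) : nat :=
  (\max_(k < (#|` A| ^ 2).+1 |
      `[< exists U : {fset G}, #|` U| = #|` A| /\ pair_count A U = k >]) k)%N.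

Local Open Scope ring_scope.
Definition eps_star (R : realType) (G : zmodType) (A : {fset G}) : R :=
  1 - (max_pair_count A)%:R / ((#|` A| ^ 2)%N)%:R.

Definition is_subgroup (G : zmodType) (H : {fset G}) : Prop :=
  0 \in H /\ forall x y, x \in H -> y \in H -> x - y \in H.

From HB Require Import structures.
From mathcomp Require Import all_boot all_order all_algebra.
From mathcomp Require Import finmap.
From mathcomp Require Import boolp reals.
From mathcomp Require Import ring lra zify.
Import Order.TTheory GRing.Theory Num.Theory.
Local Open Scope fset_scope.

(* Write n = |H|, t = |T| and A = H u T.  Taking U = A makes every pair of
   H x H good, so the maximum is at least n^2.  Conversely, let |U| = n + t,
   p = |U n H| and q = |U \ H|.  For a in H at most p elements b of H have
   a + b in U; for b in T the sums b + a with a in H lie outside H, so at most q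
   of them are in U; and T x T contributes at most t^2.  The count is thus at
   most n p + 2 t q + t^2, which under p + q = n + t, p <= n and 2t <= n is
   largest for p = n, giving n^2 + 3 t^2.  Hence
   eps*(A) = 1 - (n^2 + O(t^2)) / (n + t)^2 = 2 t/n + O((t/n)^2). *)

Lemma big_fsetU_disjoint (R : Type) (idx : R) (op : Monoid.com_law idx)
    (K : choiceType) (A B : {fset K}) (F : K -> R) :
  [disjoint A & B] ->
  \big[op/idx]_(i <- A `|` B) F i =
    op (\big[op/idx]_(i <- A) F i) (\big[op/idx]_(i <- B) F i).
Proof.
move=> /fdisjointP_sym AB; rewrite -big_cat; apply/perm_big/uniq_perm.
- exact: fset_uniq.
- by rewrite cat_uniq !fset_uniq /= andbT; apply/hasPn => x /AB.
- by move=> x; rewrite mem_cat in_fsetU.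
Qed.

Lemma card_fsetU_disjoint (K : choiceType) (A B : {fset K}) :
  [disjoint A & B] -> #|` A `|` B| = (#|` A| + #|` B|)%N.
Proof. by move=> AB; apply/eqP; rewrite (leq_card_fsetU A B).2. Qed.

Section Counting.
Local Open Scope nat_scope.

Lemma sum_nat_bool {I : Type} (s : seq I) (P : pred I) :
  \sum_(i <- s) P i = count P s.
Proof. by rewrite -sum1_count [RHS]big_mkcond; apply: eq_bigr => i _; case: (P i). Qed.

Lemma sum_sum_bool_le {I J : Type} (r : seq I) (s : seq J) (P : I -> J -> bool) :
  \sum_(i <- r) \sum_(j <- s) P i j <= size r * size s.
Proof.
rewrite -sum1_size big_distrl /=; apply: leq_sum => i _.
by rewrite mul1n (sum_nat_bool s (P i)) count_size.
Qed.

Lemma leq_split_trade [n t p q : nat] :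
  p <= n -> p + q = n + t -> 2 * t <= n -> n * p + 2 * t * q <= n * n + 2 * t * t.
Proof.
move=> pn pq tn; have : 2 * t * (n - p) <= n * (n - p) by rewrite leq_mul2r tn orbT.
nia.
Qed.

End Counting.

Section PairCount.
Local Open Scope nat_scope.
Context {G : zmodType}.
Implicit Types A B S U X : {fset G}.

Lemma sum_mem_translate_le A S U (x : G) :
  {in A, forall a, (x + a)%R \in U -> (x + a)%R \in S} ->
  \sum_(a <- A) ((x + a)%R \in U) <= #|` S|.
Proof.
move=> AS; rewrite (sum_nat_bool A (fun a => (x + a)%R \in U)).
rewrite -size_filter -(size_map (+%R x)); apply: uniq_leq_size.
  by rewrite map_inj_uniq ?filter_uniq ?fset_uniq //; apply: addrI.
by move=> y /mapP [a]; rewrite mem_filter => /andP [xaU aA] ->; apply: AS.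
Qed.

Lemma sum_sum_mem_translate_le X A S U :
  {in X & A, forall x a, (x + a)%R \in U -> (x + a)%R \in S} ->
  \sum_(x <- X) \sum_(a <- A) ((x + a)%R \in U) <= #|` X| * #|` S|.
Proof.
move=> XAS; rewrite {1}card_fset_sum1 big_distrl /= [X in X <= _]big_seq [X in _ <= X]big_seq.
by apply: leq_sum => x xX; rewrite mul1n; apply: sum_mem_translate_le => a; apply: XAS.
Qed.

Lemma pair_count_le A U : pair_count A U <= #|` A| ^ 2.
Proof. by rewrite -mulnn; apply: sum_sum_bool_le. Qed.

Lemma pair_count_disjointU A B U : [disjoint A & B] ->
  pair_count (A `|` B) U =
    \sum_(a <- A) \sum_(a' <- A) ((a + a')%R \in U)
    + 2 * \sum_(b <- B) \sum_(a <- A) ((b + a)%R \in U)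
    + \sum_(b <- B) \sum_(b' <- B) ((b + b')%R \in U).
Proof.
move=> AB; rewrite /pair_count big_fsetU_disjoint //=.
under eq_bigr do rewrite big_fsetU_disjoint //=.
under [X in _ + X]eq_bigr do rewrite big_fsetU_disjoint //=.
rewrite !big_split /= [X in _ + X + _]exchange_big /=.
under [X in _ + X + _]eq_bigr do under eq_bigr do rewrite addrC.
by rewrite mul2n -addnn !addnA.
Qed.

Lemma pair_count_le_max A U : #|` U| = #|` A| -> pair_count A U <= max_pair_count A.
Proof.
move=> cardU; have lt_count : pair_count A U < (#|` A| ^ 2).+1 by rewrite ltnS pair_count_le.
apply: leq_trans (leq_bigmax_cond (Ordinal lt_count) _) => //=.
by apply/asboolP; exists U.
Qed.

Lemma max_pair_count_le A m :
  (forall U, #|` U| = #|` A| -> pair_count A U <= m) -> max_pair_count A <= m.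
Proof. by move=> bound; apply/bigmax_leqP => k /asboolP [U [cardU <-]]; apply: bound. Qed.

End PairCount.

Section SubgroupUnion.
Local Open Scope nat_scope.
Context {G : zmodType} {H : {fset G}}.
Hypothesis subH : is_subgroup H.

Lemma subgroup_card_gt0 : 0 < #|` H|.
Proof. by rewrite cardfs_gt0; apply/fset0Pn; exists 0%R; case: subH. Qed.

Lemma subgroup_add x y : x \in H -> y \in H -> (x + y)%R \in H.
Proof.
case: subH => H0 HB xH yH.
by rewrite -[y]opprK -[(- y)%R]sub0r; apply/HB/HB.
Qed.

Lemma subgroup_add_notin x y : x \in H -> y \notin H -> (y + x)%R \notin H.
Proof.
case: subH => _ HB xH; apply: contra => yxH.
by rewrite -(addrK x y); apply: HB.
Qed.

Context {T : {fset G}}.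
Hypothesis HT : [disjoint H & T].

Lemma pair_count_subgroupU_le U :
  #|` U| = #|` H| + #|` T| -> 2 * #|` T| <= #|` H| ->
  pair_count (H `|` T) U <= #|` H| ^ 2 + 3 * #|` T| ^ 2.
Proof.
move=> cardU tH; rewrite pair_count_disjointU //.
have /fdisjointP_sym TnH := HT.
have HH : \sum_(a <- H) \sum_(a' <- H) ((a + a')%R \in U) <= #|` H| * #|` (U `&` H)|.
  apply: sum_sum_mem_translate_le => a a' aH a'H aa'U.
  by rewrite in_fsetI aa'U subgroup_add.
have TH : \sum_(b <- T) \sum_(a <- H) ((b + a)%R \in U) <= #|` T| * #|` (U `\` H)|.
  apply: sum_sum_mem_translate_le => b a bT aH baU.
  by rewrite in_fsetD baU subgroup_add_notin ?TnH.
have TT := sum_sum_bool_le T T (fun b b' => (b + b')%R \in U).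
have UHn : #|` (U `&` H)| <= #|` H| by apply/fsubset_leq_card/fsubsetIr.
have trade := leq_split_trade UHn (etrans (cardfsID H U) cardU) tH.
rewrite -!mulnn; lia.
Qed.

Lemma pair_count_subgroupU_ge : #|` H| ^ 2 <= pair_count (H `|` T) (H `|` T).
Proof.
rewrite pair_count_disjointU // -addnA (leq_trans _ (leq_addr _ _)) //.
rewrite -mulnn {1}card_fset_sum1 big_distrl /= big_seq [X in _ <= X]big_seq.
apply: leq_sum => a aH; rewrite mul1n card_fset_sum1 big_seq [X in _ <= X]big_seq.
by apply: leq_sum => a' a'H; rewrite in_fsetU subgroup_add.
Qed.

Lemma max_pair_count_subgroupU : 2 * #|` T| <= #|` H| ->
  #|` H| ^ 2 <= max_pair_count (H `|` T) <= #|` H| ^ 2 + 3 * #|` T| ^ 2.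
Proof.
move=> tH; apply/andP; split.
  exact: leq_trans pair_count_subgroupU_ge (pair_count_le_max _ _ erefl).
apply: max_pair_count_le => U cardU.
by apply: pair_count_subgroupU_le; rewrite // cardU card_fsetU_disjoint.
Qed.

End SubgroupUnion.

Section Estimate.
Local Open Scope ring_scope.

Lemma eps_estimate_normalized (R : realFieldType) (delta x m : R) :
  0 <= x -> x < delta / 8 -> 1 <= m <= 1 + 3 * x ^+ 2 ->
  `|1 - m / (1 + x) ^+ 2 - 2 * x| <= delta * x.
Proof.
move=> x0 xdelta /andP [m1 m2].
have sq_gt0 : 0 < (1 + x) ^+ 2 by rewrite exprn_gt0 // ltr_wpDr.
have low : (1 - 2 * x) * (1 + x) ^+ 2 <= m.
  have cubic_ge0 : 0 <= x ^+ 2 * (3 + 2 * x) by rewrite mulr_ge0 ?sqr_ge0 //; lra.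
  have -> : (1 - 2 * x) * (1 + x) ^+ 2 = 1 - x ^+ 2 * (3 + 2 * x) by ring.
  lra.
have up : m <= (1 - 2 * x + delta * x) * (1 + x) ^+ 2.
  have delta_gain : 8 * x * (x * (1 + x) ^+ 2) <= delta * (x * (1 + x) ^+ 2).
    by rewrite ler_wpM2r ?mulr_ge0 ?sqr_ge0 //; lra.
  have quartic_ge0 : 0 <= x ^+ 3 * (2 + 16 * x + 8 * x ^+ 2).
    by rewrite mulr_ge0 ?exprn_ge0 // ?sqr_ge0; nra.
  nra.
rewrite -(ler_pdivlMr _ _ sq_gt0) in low; rewrite -(ler_pdivrMr _ _ sq_gt0) in up.
have delta_x_ge0 : 0 <= delta * x by rewrite mulr_ge0 //; lra.
rewrite ler_norml; apply/andP; split; lra.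
Qed.

Lemma eps_estimate (R : realFieldType) (delta n t M : R) :
  0 < n -> 0 <= t -> t / n < delta / 8 -> n ^+ 2 <= M <= n ^+ 2 + 3 * t ^+ 2 ->
  `|1 - M / (n + t) ^+ 2 - 2 * (t / n)| <= delta * (t / n).
Proof.
move=> n_gt0 t_ge0 tn_small /andP [M_ge M_le].
have n_neq0 : n != 0 by rewrite gt_eqF.
have n2_gt0 : 0 < n ^+ 2 by rewrite exprn_gt0.
have -> : M / (n + t) ^+ 2 = M / n ^+ 2 / (1 + t / n) ^+ 2.
  by field; rewrite n_neq0 /= gt_eqF // ltr_wpDr.
apply: eps_estimate_normalized => //; first exact: divr_ge0 t_ge0 (ltW n_gt0).
rewrite ler_pdivlMr // mul1r M_ge ler_pdivrMr //=.
by have -> : (1 + 3 * (t / n) ^+ 2) * n ^+ 2 = n ^+ 2 + 3 * t ^+ 2 by field.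
Qed.

End Estimate.

Local Open Scope ring_scope.

Theorem mainTheorem6 (R : realType) (delta : R) (hdelta : 0 < delta) :
  exists eta : R, 0 < eta /\
    forall (G : zmodType) (H T : {fset G}),
      is_subgroup H ->
      T != fset0 ->
      (forall t, t \in T -> t \notin H) ->
      (#|` T|%:R / #|` H|%:R : R) < eta ->
      `| eps_star R (H `|` T) - 2 * (#|` T|%:R / #|` H|%:R) |
        <= delta * (#|` T|%:R / #|` H|%:R).
Proof.
exists (Num.min (delta / 8) (1 / 2)); split; first by rewrite lt_min; apply/andP; split; lra.
move=> G H T subH _ /fdisjointP_sym HT; rewrite lt_min => /andP [small half].
have n_gt0 : 0 < #|` H|%:R :> R by rewrite ltr0n subgroup_card_gt0.
have tH : (2 * #|` T| <= #|` H|)%N.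
  rewrite ltr_pdivrMr // in half.
  have : (2 * #|` T|)%N%:R < #|` H|%:R :> R by rewrite natrM; lra.
  by rewrite ltr_nat => /ltnW.
have /andP [M_ge M_le] := max_pair_count_subgroupU subH HT tH.
rewrite /eps_star card_fsetU_disjoint // natrX natrD.
apply: eps_estimate => //.
by rewrite -!natrX -natrM -natrD !ler_nat M_ge M_le.
Qed.
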